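(* Let $S=(G,P,\Lambda,I)$ be a completely simple semigroup with non-singular sandwich matrix $P$. If the set $M=\{(x,y)\in S^2\mid x=(1,1_G,1)\text{ or }y=(1,1_G,1)\}$ is algebraic over $S$ in the language $\mathcal{L}_S$, then $S$ is an equational domain in the language $\mathcal{L}_S$.
   Context: Rees representation: a completely simple semigroup $S=(G,P,\Lambda,I)$ is given by a group $G$, index sets $\Lambda,I$ (each containing an element $1$), and a matrix $P=(p_{i\lambda})_{i\in I,\lambda\in\Lambda}$ over $G$ normalised so that $p_{1\lambda}=p_{i1}=1_G$; elements are triples $(\lambda,g,i)$ with product $(\lambda,g,i)(\mu,h,j)=(\lambda,gp_{i\mu}h,j)$ and inversion $(\lambda,g,i)^{-1}=(\lambda,p_{i\lambda}^{-1}g^{-1}p_{i\lambda}^{-1},i)$. $P$ is non-singular if it has no two equal rows and no two equal columns. The language $\mathcal{L}_S$ is $\{\cdot,{}^{-1}\}$ plus a constant for each element of $S$. An equation is an equality of two $\mathcal{L}_S$-terms; a system is a set of equations; a subset of $S^n$ is algebraic if it is the solution set of some system; $S$ is an equational domain (e.d.) if every finite union of algebraic sets is algebraic. *)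

From mathcomp Require Import all_boot.
Set Implicit Arguments.
Unset Strict Implicit.
Unset Printing Implicit Defensive.

(** G is an arbitrary (possibly infinite) group given by its operations and
    axioms; Lambda and I are index types with distinguished element 1;
    P = (p_{i,lambda}) is normalised: p_{1,lambda} = p_{i,1} = 1_G. *)
Record ReesData := {
  grp : Type;
  gmul : grp -> grp -> grp;
  ginv : grp -> grp;
  gone : grp;
  gmulA : forall a b c, gmul a (gmul b c) = gmul (gmul a b) c;
  gmul1g : forall a, gmul gone a = a;
  gmulg1 : forall a, gmul a gone = a;
  gmulVg : forall a, gmul (ginv a) a = gone;
  gmulgV : forall a, gmul a (ginv a) = gone;
  Lam : Type;
  Idx : Type;
  lam1 : Lam;
  idx1 : Idx;
  sandwich : Idx -> Lam -> grp;
  sandwich_row1 : forall l, sandwich idx1 l = gone;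
  sandwich_col1 : forall i, sandwich i lam1 = gone
}.

Definition elt (R : ReesData) : Type := (Lam R * grp R * Idx R)%type.

Definition smul (R : ReesData) (x y : elt R) : elt R :=
  match x, y with
  | (l, g, i), (m, h, j) => (l, gmul g (gmul (sandwich i m) h), j)
  end.

Definition sinv (R : ReesData) (x : elt R) : elt R :=
  match x with
  | (l, g, i) =>
      (l, gmul (ginv (sandwich i l))
                 (gmul (ginv g) (ginv (sandwich i l))), i)
  end.

Definition sunit (R : ReesData) : elt R := (@lam1 R, @gone R, @idx1 R).

Definition nonsingular (R : ReesData) : Prop :=
  (forall i i' : Idx R, (forall l, sandwich i l = sandwich i' l) -> i = i') /\
  (forall l l' : Lam R, (forall i, sandwich i l = sandwich i l') -> l = l').

Inductive term (S : Type) (n : nat) : Type :=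
  | tVar : 'I_n -> term S n
  | tConst : S -> term S n
  | tMul : term S n -> term S n -> term S n
  | tInv : term S n -> term S n.

Fixpoint teval (R : ReesData) (n : nat) (x : 'I_n -> elt R) (t : term (elt R) n)
  : elt R :=
  match t with
  | tVar i => x i
  | tConst s => s
  | tMul t1 t2 => smul (teval x t1) (teval x t2)
  | tInv t1 => sinv (teval x t1)
  end.

Definition equation (R : ReesData) (n : nat) : Type :=
  (term (elt R) n * term (elt R) n)%type.

Definition system (R : ReesData) (n : nat) : Type := equation R n -> Prop.

Definition solutions (R : ReesData) (n : nat) (Ss : system R n)
  : ('I_n -> elt R) -> Prop :=
  fun x => forall e, Ss e -> teval x e.1 = teval x e.2.

Definition algebraic (R : ReesData) (n : nat) (Y : ('I_n -> elt R) -> Prop)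
  : Prop :=
  exists Ss : system R n, forall x, Y x <-> solutions Ss x.

Definition equational_domain (R : ReesData) : Prop :=
  forall (n k : nat) (Y : 'I_k.+1 -> ('I_n -> elt R) -> Prop),
    (forall j, algebraic (Y j)) ->
    algebraic (fun x => exists j, Y j x).

Definition Mset (R : ReesData) : ('I_2 -> elt R) -> Prop :=
  fun p => p ord0 = sunit R \/ p (@Ordinal 2 1 isT) = sunit R.

(** Over a non-singular sandwich matrix an element u of S is determined by
    the group entries of the products (1,1,k) u (r,1,1), for all k and r.
    Hence every equation t = s is equivalent to the family of equations
    (1,1,k) t (r,1,1) ((1,1,k) s (r,1,1))^-1 = e, where e = (1,1_G,1), and
    every algebraic set is cut out by equations of the form t_a = e.  If
    Y1 = {t_a = e}_a and Y2 = {s_b = e}_b, then Y1 u Y2 is the intersection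
    over all a, b of {t_a = e or s_b = e}, the preimage of M under the term
    map (t_a, s_b).  Preimages of algebraic sets under term maps and
    arbitrary intersections of algebraic sets are algebraic, so Y1 u Y2 is
    algebraic, and induction handles finite unions. *)

From mathcomp Require Import all_boot.
From Stdlib Require Import Classical.

Set Implicit Arguments.
Unset Strict Implicit.
Unset Printing Implicit Defensive.

Section ReesArithmetic.

Variable R : ReesData.

Local Notation "a * b" := (gmul a b).
Local Notation "1" := (gone R).

Lemma ginv1 : ginv 1 = 1.
Proof. by rewrite -[ginv _]gmulg1 gmulVg. Qed.

Lemma gmulI : right_injective (@gmul R).
Proof.
by move=> a b c eq_ab_ac; rewrite -[b]gmul1g -[c]gmul1g -(gmulVg a) -!gmulA eq_ab_ac.
Qed.

Lemma gmulIg : left_injective (@gmul R).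
Proof.
by move=> a b c eq_ba_ca; rewrite -[b]gmulg1 -[c]gmulg1 -(gmulgV a) !gmulA eq_ba_ca.
Qed.

Definition frame (k : Idx R) (r : Lam R) (u : elt R) : elt R :=
  smul (smul (lam1 R, 1, k) u) (r, 1, idx1 R).

Definition frame_coord (k : Idx R) (r : Lam R) (u : elt R) : grp R :=
  let: (l, g, i) := u in sandwich k l * g * sandwich i r.

Definition frame_div (k : Idx R) (r : Lam R) (u v : elt R) : elt R :=
  smul (frame k r u) (sinv (frame k r v)).

Lemma frameE k r u : frame k r u = (lam1 R, frame_coord k r u, idx1 R).
Proof. by case: u => [[l g] i]; rewrite /frame /= gmul1g gmulg1. Qed.

Lemma frame_div_eq_sunit k r u v :
  frame_div k r u v = sunit R <-> frame_coord k r u = frame_coord k r v.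
Proof.
rewrite /frame_div !frameE /= sandwich_row1 ginv1 !gmul1g gmulg1 /sunit.
split=> [[/(congr1 (fun a => a * frame_coord k r v))] | ->]; last by rewrite gmulgV.
by rewrite -gmulA gmulVg gmulg1 gmul1g.
Qed.

Lemma frame_coord_inj (u v : elt R) : nonsingular R ->
  (forall k r, frame_coord k r u = frame_coord k r v) -> u = v.
Proof.
case: u v => [[l g] i] [[l' g'] i'] [rowsP colsP] /= eq_coord.
have eq_g : g = g'.
  by have := eq_coord (idx1 R) (lam1 R); rewrite !sandwich_row1 !sandwich_col1 !gmul1g !gmulg1.
have eq_l : l = l'.
  apply: colsP => k; apply: (@gmulIg g).
  by have := eq_coord k (lam1 R); rewrite !sandwich_col1 !gmulg1 eq_g.
have eq_i : i = i'.
  apply: rowsP => r; apply: (@gmulI g).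
  by have := eq_coord (idx1 R) r; rewrite !sandwich_row1 !gmul1g eq_g.
by rewrite eq_l eq_g eq_i.
Qed.

Lemma eq_iff_frame_div (u v : elt R) : nonsingular R ->
  u = v <-> forall k r, frame_div k r u v = sunit R.
Proof.
move=> NS; split=> [-> k r | eq_div]; first exact/frame_div_eq_sunit.
by apply: frame_coord_inj => // k r; apply/frame_div_eq_sunit.
Qed.

End ReesArithmetic.

Fixpoint tsubst (S : Type) (m n : nat) (s : 'I_m -> term S n) (t : term S m)
  : term S n :=
  match t with
  | tVar i => s i
  | tConst c => tConst n c
  | tMul t1 t2 => tMul (tsubst s t1) (tsubst s t2)
  | tInv t1 => tInv (tsubst s t1)
  end.

Lemma teval_subst (R : ReesData) m n (s : 'I_m -> term (elt R) n) x t :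
  teval x (tsubst s t) = teval (fun i => teval x (s i)) t.
Proof. by elim: t => //= [t1 -> t2 ->|t1 ->]. Qed.

Definition tframe_div (R : ReesData) n k r (t s : term (elt R) n) : term (elt R) n :=
  let tframe t := tMul (tMul (tConst n (lam1 R, gone R, k)) t)
                       (tConst n (r, gone R, idx1 R)) in
  tMul (tframe t) (tInv (tframe s)).

Section AlgebraicSets.

Variables (R : ReesData) (n : nat).

Local Notation point := ('I_n -> elt R).

Lemma algebraic_ext (Y Y' : point -> Prop) :
  (forall x, Y x <-> Y' x) -> algebraic Y -> algebraic Y'.
Proof. by move=> eqY [Ss defY]; exists Ss => x; rewrite -eqY. Qed.

Lemma algebraic_bigcap (A : Type) (Y : A -> point -> Prop) :
  (forall a, algebraic (Y a)) -> algebraic (fun x => forall a, Y a x).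
Proof.
move=> algY.
exists (fun e => exists a (Ss : system R n), (forall x, Y a x <-> solutions Ss x) /\ Ss e).
move=> x; split=> [Yx e [a [Ss [defY Ss_e]]] | solx a].
  exact: (proj1 (defY x) (Yx a)).
have [Ss defY] := algY a; apply/defY => e Ss_e.
by apply: solx; exists a, Ss.
Qed.

Lemma algebraic_preimage m (s : 'I_m -> term (elt R) n)
    (Y : ('I_m -> elt R) -> Prop) :
  algebraic Y -> algebraic (fun x => Y (fun i => teval x (s i))).
Proof.
move=> [Ss defY].
exists (fun e => exists2 E, Ss E & e = (tsubst s E.1, tsubst s E.2)) => x.
rewrite defY; split=> [solx _ [E Ss_E ->] | solx E Ss_E] /=.
  by rewrite !teval_subst; apply: solx.
by rewrite -!teval_subst; apply: (solx (_, _)); exists E.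
Qed.

Lemma algebraic_sunit_equations (Y : point -> Prop) :
  nonsingular R -> algebraic Y ->
  exists (A : Type) (t : A -> term (elt R) n),
    forall x, Y x <-> forall a, teval x (t a) = sunit R.
Proof.
move=> NS [Ss defY].
exists ({e | Ss e} * Idx R * Lam R)%type.
exists (fun '(e, k, r) => tframe_div k r (sval e).1 (sval e).2) => x.
rewrite defY; split=> [solx [[[e Ss_e] k] r] | solx e Ss_e] /=.
  exact: (proj1 (eq_iff_frame_div _ _ NS) (solx e Ss_e)).
by apply/(eq_iff_frame_div _ _ NS) => k r; apply: (solx (exist _ e Ss_e, k, r)).
Qed.

Lemma forall_or_distr (A B : Type) (P : A -> Prop) (Q : B -> Prop) :
  (forall a, P a) \/ (forall b, Q b) <-> forall a b, P a \/ Q b.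
Proof.
split=> [[allP a b | allQ a b] | PQ]; [by left | by right |].
have [allP | notallP] := classic (forall a, P a); first by left.
have [a notPa] := not_all_ex_not _ _ notallP.
by right=> b; case: (PQ a b).
Qed.

Lemma algebraicU2 (Y1 Y2 : point -> Prop) :
  nonsingular R -> algebraic (@Mset R) -> algebraic Y1 -> algebraic Y2 ->
  algebraic (fun x => Y1 x \/ Y2 x).
Proof.
move=> NS algM /(algebraic_sunit_equations NS) [A [t defY1]]
  /(algebraic_sunit_equations NS) [B [s defY2]].
pose tpair a b (i : 'I_2) := if val i == 0 then t a else s b.
apply: (@algebraic_ext (fun x => forall a b, Mset (fun i => teval x (tpair a b i)))).
  by move=> x; rewrite defY1 defY2 forall_or_distr.
by apply: algebraic_bigcap => a; apply: algebraic_bigcap => b; apply: algebraic_preimage.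
Qed.

End AlgebraicSets.

Lemma exists_ordS (k : nat) (P : 'I_k.+1 -> Prop) :
  (exists j, P j) <-> P ord0 \/ exists j : 'I_k, P (lift ord0 j).
Proof.
split=> [[j Pj] | [P0 | [j Pj]]]; [| by exists ord0 | by exists (lift ord0 j)].
by case: (unliftP ord0 j) Pj => [j' -> | ->]; [right; exists j' | left].
Qed.

Theorem mainTheorem5 (R : ReesData) :
  nonsingular R -> algebraic (@Mset R) -> equational_domain R.
Proof.
move=> NS algM n k; elim: k => [|k IHk] Y algY.
  apply: algebraic_ext (algY ord0) => x.
  by split=> [Yx | [j]]; [exists ord0 | rewrite ord1].
have algY_tail := IHk (fun j => Y (lift ord0 j)) (fun j => algY _).
apply: algebraic_ext (algebraicU2 NS algM (algY ord0) algY_tail) => x.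
exact: iff_sym (exists_ordS _).
Qed.
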